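(* In a nondeterministic Outcome Logic instance, for every program $C$ (terminating after finitely many steps), outcome assertion $\varphi$ and atomic assertions $Q_1,\ldots,Q_n$: $\not\vDash\langle\varphi\rangle\,C\,\langle\bigoplus_{i=1}^nQ_i\rangle$ holds iff there is an outcome assertion $\varphi'$ with $\varphi'\Rightarrow\varphi$ and $\mathsf{sat}(\varphi')$ such that either (i) $\vDash\langle\varphi'\rangle\,C\,\langle\overline{Q}_i\rangle$ for some $i$, or (ii) $\vDash\langle\varphi'\rangle\,C\,\langle(\bigwedge_{i=1}^n\overline{Q}_i)\oplus\top\rangle$, or (iii) $\vDash\langle\varphi'\rangle\,C\,\langle\top^\oplus\rangle$.
   Context: Nondeterministic instance: powerset monad with $\mathsf{bind}(S,k)=\bigcup_{x\in S}k(x)$, $\mathsf{unit}(x)=\{x\}$, monoid $(2^\Sigma,\cup,\emptyset)$. Programs $C::=\mathbb{0}\mid\mathbb{1}\mid C_1;C_2\mid C_1+C_2\mid C^\star\mid c$ have semantics $[\![\mathbb{0}]\!](\sigma)=\emptyset$, $[\![\mathbb{1}]\!](\sigma)=\{\sigma\}$, $[\![C_1;C_2]\!](\sigma)=\bigcup_{\tau\in[\![C_1]\!](\sigma)}[\![C_2]\!](\tau)$, $[\![C_1+C_2]\!](\sigma)=[\![C_1]\!](\sigma)\cup[\![C_2]\!](\sigma)$, $[\![C^\star]\!]$ the least fixed point of $f\mapsto\lambda\sigma.f^\dagger([\![C]\!](\sigma))\cup\{\sigma\}$ with $f^\dagger(S)=\bigcup_{\sigma\in S}f(\sigma)$. Atomic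 commands are those of the paper's guarded command languages: $\mathsf{assume}\ e$ (returns $\{\sigma\}$ if Boolean expression $e$ is true in $\sigma$, else $\emptyset$) and deterministic commands such as assignment $x:=e$ (and the heap commands of the memory language), whose effect on each state is a single state. Atomic assertions carry a satisfaction relation $\vDash_\Sigma$ on states and are closed under negation $\overline{Q}$ ($\sigma\vDash_\Sigma\overline{Q}$ iff $\sigma\not\vDash_\Sigma Q$); a set $S$ satisfies atomic $P$ iff $S\neq\emptyset$ and all $\sigma\in S$ satisfy $P$. Outcome assertions: $\top,\bot,\top^\oplus,\land,\oplus,\Rightarrow$, atomic; $S\vDash\top^\oplus$ iff $S=\emptyset$; $S\vDash\varphi\oplus\psi$ iff $S=S_1\cup S_2$ with $S_1\vDash\varphi,S_2\vDash\psi$; other connectives classical. $\vDash\langle\varphi\rangle C\langle\psi\rangle$ iff for all $S\subseteq\Sigma$, $S\vDash\varphi$ implies $[\![C]\!]^\dagger(S)\vDash\psi$. $\varphi'\Rightarrow\varphi$ means every set satisfying $\varphi'$ satisfies $\varphi$; $\mathsf{sat}(\varphi')$ means some set satisfies $\varphi'$. *)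

From Stdlib Require Import List.
Import ListNotations.

Set Implicit Arguments.

Section OL.
Variable Sigma : Type.

Definition stset := Sigma -> Prop.

(* Atomic commands of the guarded command language:
   assume e (e a Boolean expression, evaluated on states) and
   deterministic commands (e.g. assignment), whose effect on each state is a
   single state. *)
Inductive atom_cmd : Type :=
| ACAssume (e : Sigma -> bool)
| ACDet (f : Sigma -> Sigma).

Inductive cmd : Type :=
| CZero
| COne
| CSeq (C1 C2 : cmd)
| CPlus (C1 C2 : cmd)
| CStar (C : cmd)
| CAtom (c : atom_cmd).

(* [eval C s t] means t \in [[C]](s).  For C^*, the inductive definition is
   exactly the least fixed point of f |-> \s. f^dagger([[C]](s)) \cup {s}. *)
Inductive eval : cmd -> Sigma -> Sigma -> Prop :=
| EOne s : eval COne s s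
| ESeq C1 C2 s t u : eval C1 s t -> eval C2 t u -> eval (CSeq C1 C2) s u
| EPlusL C1 C2 s t : eval C1 s t -> eval (CPlus C1 C2) s t
| EPlusR C1 C2 s t : eval C2 s t -> eval (CPlus C1 C2) s t
| EStarRefl C s : eval (CStar C) s s
| EStarStep C s t u : eval C s t -> eval (CStar C) t u -> eval (CStar C) s u
| EAssume e s : e s = true -> eval (CAtom (ACAssume e)) s s
| EDet f s : eval (CAtom (ACDet f)) s (f s).

Definition sem_dag (C : cmd) (S : stset) : stset :=
  fun t => exists s, S s /\ eval C s t.

Definition atom := Sigma -> Prop.
Definition neg_atom (Q : atom) : atom := fun s => ~ Q s.

Inductive oassn : Type :=
| OTop
| OBot
| OTopPlus
| OAnd (p q : oassn)
| OPlus (p q : oassn)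
| OImp (p q : oassn)
| OAtom (P : atom).

Fixpoint osat (phi : oassn) (S : stset) : Prop :=
  match phi with
  | OTop => True
  | OBot => False
  | OTopPlus => forall s, ~ S s
  | OAnd p q => osat p S /\ osat q S
  | OPlus p q => exists S1 S2 : stset,
      (forall s, S s <-> S1 s \/ S2 s) /\ osat p S1 /\ osat q S2
  | OImp p q => osat p S -> osat q S
  | OAtom P => (exists s, S s) /\ (forall s, S s -> P s)
  end.

(* \bigoplus_{i=1}^n Q_i for the nonempty list Q_1 :: [Q_2; ...; Q_n] *)
Fixpoint big_oplus (Q1 : atom) (Qs : list atom) : oassn :=
  match Qs with
  | [] => OAtom Q1
  | Q2 :: Qs' => OPlus (OAtom Q1) (big_oplus Q2 Qs')
  end.

Fixpoint big_and_neg (Q1 : atom) (Qs : list atom) : oassn :=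
  match Qs with
  | [] => OAtom (neg_atom Q1)
  | Q2 :: Qs' => OAnd (OAtom (neg_atom Q1)) (big_and_neg Q2 Qs')
  end.

Definition valid (phi : oassn) (C : cmd) (psi : oassn) : Prop :=
  forall S : stset, osat phi S -> osat psi (sem_dag C S).

Definition oimplies (phi' phi : oassn) : Prop :=
  forall S : stset, osat phi' S -> osat phi S.

Definition osatisfiable (phi : oassn) : Prop := exists S : stset, osat phi S.

End OL.

Arguments CZero {Sigma}.
Arguments COne {Sigma}.
Arguments OTop {Sigma}.
Arguments OBot {Sigma}.
Arguments OTopPlus {Sigma}.

(* A set T of final states satisfies Q_1 ⊕ ... ⊕ Q_n exactly when every state
   of T satisfies some Q_i and every Q_i is satisfied by some state of T.  So T
   fails it in one of three ways: T is empty, some state of T satisfies no Q_i,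
   or T is nonempty and avoids some Q_i; these are the three postconditions.
   Given a counterexample S to the triple, strengthening φ so that it pins down
   the part of S responsible for the failure (S' ⊆ S, or s ∈ S' for the initial
   state s of a bad run) makes the corresponding failure hold for every
   admissible S'. *)

From Stdlib Require Import List Classical.

Set Implicit Arguments.
Unset Strict Implicit.

Section OutcomeLogic.
Variable Sigma : Type.

Implicit Types (S T : stset Sigma) (Q : atom Sigma) (Qs : list (atom Sigma))
  (phi psi : oassn Sigma) (C : cmd Sigma) (s t : Sigma).

Lemma osat_big_oplus Q1 Qs T :
  osat (big_oplus Q1 Qs) T <->
  (forall t, T t -> exists Q, In Q (Q1 :: Qs) /\ Q t) /\
  (forall Q, In Q (Q1 :: Qs) -> exists t, T t /\ Q t).
Proof.
  revert Q1 T; induction Qs as [|Q2 Qs IH]; intros Q1 T; simpl.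
  - split.
    + intros [[s Hs] HQ1]; split.
      * intros t Ht; exists Q1; auto.
      * intros Q [<-|[]]; eauto.
    + intros [Hcov Hwit]; split.
      * destruct (Hwit Q1 (or_introl eq_refl)) as [t [Ht _]]; eauto.
      * intros t Ht; destruct (Hcov t Ht) as [Q [[<-|[]] HQ]]; exact HQ.
  - setoid_rewrite IH; split.
    + intros [T1 [T2 [Hsplit [[[s1 Hs1] HQ1] [Hcov Hwit]]]]]; split.
      * intros t Ht; apply Hsplit in Ht as [Ht|Ht].
        -- exists Q1; auto.
        -- destruct (Hcov t Ht) as [Q [HQ HQt]]; simpl in HQ; eauto.
      * intros Q [<-|HQ].
        -- exists s1; split; [apply Hsplit|]; auto.
        -- destruct (Hwit Q HQ) as [t [Ht HQt]]; exists t; split; [apply Hsplit|]; auto.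
    + intros [Hcov Hwit].
      exists (fun t => T t /\ Q1 t),
             (fun t => T t /\ exists Q, In Q (Q2 :: Qs) /\ Q t).
      split; [|split; [split|split]].
      * intros t; split; [|tauto].
        intros Ht; destruct (Hcov t Ht) as [Q [[<-|HQ] HQt]]; [left|right]; eauto.
      * destruct (Hwit Q1 (or_introl eq_refl)) as [t Ht]; eauto.
      * intros t [_ HQ1]; exact HQ1.
      * intros t [_ HQ]; exact HQ.
      * intros Q HQ; destruct (Hwit Q (or_intror HQ)) as [t [Ht HQt]].
        exists t; eauto.
Qed.

Lemma osat_big_and_neg Q1 Qs T :
  osat (big_and_neg Q1 Qs) T <->
  (exists t, T t) /\ (forall t, T t -> forall Q, In Q (Q1 :: Qs) -> ~ Q t).
Proof.
  revert Q1; induction Qs as [|Q2 Qs IH]; intros Q1; simpl; unfold neg_atom.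
  - split.
    + intros [Hne Hneg]; split; [exact Hne|].
      intros t Ht Q [<-|[]]; exact (Hneg t Ht).
    + intros [Hne Hneg]; split; [exact Hne|].
      intros t Ht; exact (Hneg t Ht Q1 (or_introl eq_refl)).
  - rewrite IH; split.
    + intros [[Hne Hneg1] [_ Hneg]]; split; [exact Hne|].
      intros t Ht Q [<-|HQ]; [exact (Hneg1 t Ht)|exact (Hneg t Ht Q HQ)].
    + intros [Hne Hneg]; split; split; [exact Hne| |exact Hne|].
      * intros t Ht; exact (Hneg t Ht Q1 (or_introl eq_refl)).
      * intros t Ht Q HQ; exact (Hneg t Ht Q (or_intror HQ)).
Qed.

Lemma osat_plus_top psi T :
  osat (OPlus psi OTop) T <-> exists T1, (forall t, T1 t -> T t) /\ osat psi T1.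
Proof.
  simpl; split.
  - intros [T1 [T2 [Hsplit [Hpsi _]]]].
    exists T1; split; [intros t Ht; apply Hsplit|]; auto.
  - intros [T1 [Hsub Hpsi]]; exists T1, T.
    split; [|auto]; intros t; split; [auto|]; intros [Ht|Ht]; auto.
Qed.

Lemma osat_big_and_neg_plus_top Q1 Qs T :
  osat (OPlus (big_and_neg Q1 Qs) OTop) T <->
  exists t, T t /\ forall Q, In Q (Q1 :: Qs) -> ~ Q t.
Proof.
  rewrite osat_plus_top; split.
  - intros [T1 [Hsub Hneg]]; apply osat_big_and_neg in Hneg as [[t Ht] Hneg].
    exists t; eauto.
  - intros [t [Ht Hneg]]; exists (fun u => u = t); split.
    + intros u ->; exact Ht.
    + apply osat_big_and_neg; split; eauto.
      intros u ->; exact Hneg.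
Qed.

Lemma not_osat_big_oplus Q1 Qs T :
  ~ osat (big_oplus Q1 Qs) T <->
  (exists Qi, In Qi (Q1 :: Qs) /\ osat (OAtom (neg_atom Qi)) T)
  \/ osat (OPlus (big_and_neg Q1 Qs) OTop) T
  \/ osat OTopPlus T.
Proof.
  rewrite osat_big_oplus, osat_big_and_neg_plus_top; simpl; unfold neg_atom.
  split.
  - intros Hfail.
    destruct (classic (exists t, T t)) as [Hne|Hempty].
    2: { right; right; intros t Ht; apply Hempty; eauto. }
    destruct (classic (exists t, T t /\ forall Q, In Q (Q1 :: Qs) -> ~ Q t))
      as [Hstray|Hcov]; [right; left; exact Hstray|].
    left; apply NNPP; intros Hwit; apply Hfail; split.
    + intros t Ht; apply NNPP; intros Hnone; apply Hcov.
      exists t; split; [exact Ht|]; intros Q HQ HQt; eauto.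
    + intros Q HQ; apply NNPP; intros Hnone; apply Hwit.
      exists Q; split; [exact HQ|]; split; [exact Hne|]; intros t Ht HQt; eauto.
  - intros Hcase [Hcov Hwit].
    destruct Hcase as [[Qi [HQi [_ Havoid]]]|[[t [Ht Hneg]]|Hempty]].
    + destruct (Hwit Qi HQi) as [t [Ht HQit]]; exact (Havoid t Ht HQit).
    + destruct (Hcov t Ht) as [Q [HQ HQt]]; exact (Hneg Q HQ HQt).
    + destruct (Hwit Q1 (or_introl eq_refl)) as [t [Ht _]]; exact (Hempty t Ht).
Qed.

(* [~ (S' ⊨ S)] says that S' is empty or leaves S; forcing it to be empty then
   leaves exactly the subsets of S. *)
Definition osubset S : oassn Sigma := OImp (OImp (OAtom S) OBot) OTopPlus.

Definition ocontains s : oassn Sigma := OPlus (OAtom (fun u => u = s)) OTop.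

Lemma osat_osubset S S' : osat (osubset S) S' <-> forall s, S' s -> S s.
Proof.
  simpl; split.
  - intros Hsub s Hs; apply NNPP; intros HnS.
    refine (Hsub _ s Hs); intros [_ Hall]; exact (HnS (Hall s Hs)).
  - intros Hsub Hnot s Hs; apply Hnot; eauto.
Qed.

Lemma osat_ocontains s S : osat (ocontains s) S <-> S s.
Proof.
  unfold ocontains; rewrite osat_plus_top; simpl; split.
  - intros [T1 [Hsub [[u Hu] Heq]]]; rewrite <- (Heq u Hu); auto.
  - intros Hs; exists (fun u => u = s); split; [intros u ->; exact Hs|eauto].
Qed.

Lemma sem_dag_mono C S S' t :
  (forall s, S' s -> S s) -> sem_dag C S' t -> sem_dag C S t.
Proof. intros Hsub [s [Hs Hev]]; exists s; auto. Qed.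

Lemma not_valid_counterexample phi C psi :
  ~ valid phi C psi -> exists S, osat phi S /\ ~ osat psi (sem_dag C S).
Proof.
  intros Hnv; apply not_all_ex_not in Hnv as [S HS].
  exists S; apply imply_to_and; exact HS.
Qed.

Lemma valid_and_pre phi R C psi S :
  osat phi S -> osat R S -> valid R C psi ->
  oimplies (OAnd phi R) phi /\ osatisfiable (OAnd phi R) /\ valid (OAnd phi R) C psi.
Proof.
  intros Hphi HR Hv; split; [|split].
  - intros S' [HS' _]; exact HS'.
  - exists S; split; assumption.
  - intros S' [_ HS']; exact (Hv S' HS').
Qed.

Lemma valid_osubset_empty C S :
  (forall t, ~ sem_dag C S t) -> valid (osubset S) C OTopPlus.
Proof.
  intros Hempty S' HS' t Ht; rewrite osat_osubset in HS'.
  exact (Hempty t (sem_dag_mono HS' Ht)).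
Qed.

Lemma valid_ocontains_stray Q1 Qs C s t :
  eval C s t -> (forall Q, In Q (Q1 :: Qs) -> ~ Q t) ->
  valid (ocontains s) C (OPlus (big_and_neg Q1 Qs) OTop).
Proof.
  intros Hev Hneg S' HS'; rewrite osat_ocontains in HS'.
  apply osat_big_and_neg_plus_top; exists t; split; [exists s|]; auto.
Qed.

Lemma valid_osubset_ocontains_avoid Q C S s t :
  eval C s t -> (forall u, sem_dag C S u -> ~ Q u) ->
  valid (OAnd (osubset S) (ocontains s)) C (OAtom (neg_atom Q)).
Proof.
  intros Hev Havoid S' [Hsub Hs]; rewrite osat_osubset in Hsub; rewrite osat_ocontains in Hs.
  split; [exists t, s; auto|].
  intros u Hu; exact (Havoid u (sem_dag_mono Hsub Hu)).
Qed.

End OutcomeLogic.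

Theorem theorem5p6 (Sigma : Type) (C : cmd Sigma) (phi : oassn Sigma)
    (Q1 : atom Sigma) (Qs : list (atom Sigma)) :
  ~ valid phi C (big_oplus Q1 Qs)
  <->
  exists phi' : oassn Sigma,
    oimplies phi' phi /\ osatisfiable phi' /\
    ( (exists Qi, In Qi (Q1 :: Qs) /\ valid phi' C (OAtom (neg_atom Qi)))
      \/ valid phi' C (OPlus (big_and_neg Q1 Qs) OTop)
      \/ valid phi' C OTopPlus ).
Proof.
  split.
  - intros Hnv; destruct (not_valid_counterexample Hnv) as [S [HS Hfail]].
    apply not_osat_big_oplus in Hfail.
    destruct Hfail as [[Qi [HQi [[t [s [Hs Hev]]] Havoid]]]|[Hstray|Hempty]].
    + assert (HR : osat (OAnd (osubset S) (ocontains s)) S).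
      { split; [apply osat_osubset|apply osat_ocontains]; auto. }
      destruct (valid_and_pre HS HR (valid_osubset_ocontains_avoid Hev Havoid))
        as [Himp [Hsat Hv]].
      exists (OAnd phi (OAnd (osubset S) (ocontains s))); eauto 6.
    + apply osat_big_and_neg_plus_top in Hstray as [t [[s [Hs Hev]] Hneg]].
      destruct (valid_and_pre HS (proj2 (osat_ocontains s S) Hs)
                  (valid_ocontains_stray Hev Hneg)) as [Himp [Hsat Hv]].
      exists (OAnd phi (ocontains s)); auto.
    + destruct (valid_and_pre HS (proj2 (osat_osubset S S) (fun _ H => H))
                  (valid_osubset_empty Hempty)) as [Himp [Hsat Hv]].
      exists (OAnd phi (osubset S)); auto.
  - intros [phi' [Himp [[S HS] Hcases]]] Hv.
    apply (not_osat_big_oplus Q1 Qs (sem_dag C S)); [|exact (Hv S (Himp S HS))].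
    destruct Hcases as [[Qi [HQi Hvi]]|[Hvii|Hviii]]; eauto.
Qed.
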